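(* Let $F$ be an SCF on $n$ voters and $m\ge 3$ alternatives, and let $G$ be the GSWF defined from $F$ as follows: for alternatives $a\ne b$ and profile $x$, $G^{a,b}(x)=1$ if $\Pr_{x'}[F(x')=a\mid x'^{a,b}=x^{a,b}]>\Pr_{x'}[F(x')=b\mid x'^{a,b}=x^{a,b}]$, $G^{a,b}(x)=0$ if the reverse strict inequality holds, and in case of equality $G^{a,b}(x)$ equals the preference of a fixed voter between $a$ and $b$. Let $N^{a,b}(F)$ be the probability over a uniform profile $x$ that either $F(x)=a$ and $G^{a,b}(x)=0$, or $F(x)=b$ and $G^{a,b}(x)=1$. Then for every pair of distinct alternatives $a,b$, \[ M^{a,b}(F)\ge \big(N^{a,b}(F)\big)^2. \]
   Context: Profiles $x,x'\in(L_m)^n$ are uniformly random ($L_m$ the linear orders on $m$ alternatives). $x^{a,b}\in\{0,1\}^n$ has $x^{a,b}_i=1$ iff voter $i$ ranks $a$ above $b$. $M^{a,b}(F)=\Pr[F(x)=a,\ F(x')=b]$ with $x,x'$ uniform subject to $x^{a,b}=x'^{a,b}$. *)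

From HB Require Import structures.
From mathcomp Require Import all_boot all_order all_algebra all_fingroup.
Set Implicit Arguments. Unset Strict Implicit. Unset Printing Implicit Defensive.
Import Order.TTheory GRing.Theory Num.Theory.

(* A linear order on the alternatives 'I_m is represented by a permutation
   s : {perm 'I_m}, where s c is the rank (position) of alternative c;
   rank 0 is the top. *)
Notation profile n m := {ffun 'I_n -> {perm 'I_m}}.

Definition prefers m (s : {perm 'I_m}) (a b : 'I_m) : bool := (s a < s b)%N.

Definition pattern n m (x : profile n m) (a b : 'I_m) : {ffun 'I_n -> bool} :=
  [ffun i => prefers (x i) a b].

Local Open Scope ring_scope.

Definition condPr n m (F : profile n m -> 'I_m) (a b : 'I_m)
    (v : {ffun 'I_n -> bool}) (c : 'I_m) : rat :=
  (#|[set x : profile n m | (pattern x a b == v) && (F x == c)]|%:R)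
  / (#|[set x : profile n m | pattern x a b == v]|%:R).

Definition GSWF n m (F : profile n m -> 'I_m) (i0 : 'I_n) (a b : 'I_m)
    (x : profile n m) : bool :=
  let pa := condPr F a b (pattern x a b) a in
  let pb := condPr F a b (pattern x a b) b in
  if pb < pa then true
  else if pa < pb then false
  else prefers (x i0) a b.

Definition Nab n m (F : profile n m -> 'I_m) (i0 : 'I_n) (a b : 'I_m) : rat :=
  (#|[set x : profile n m |
        ((F x == a) && ~~ GSWF F i0 a b x) || ((F x == b) && GSWF F i0 a b x)]|%:R)
  / (#|[set: profile n m]|%:R).

Definition Mab n m (F : profile n m -> 'I_m) (a b : 'I_m) : rat :=
  (#|[set p : profile n m * profile n m |
        [&& pattern p.1 a b == pattern p.2 a b, F p.1 == a & F p.2 == b]]|%:R)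
  / (#|[set p : profile n m * profile n m |
        pattern p.1 a b == pattern p.2 a b]|%:R).

From HB Require Import structures.
From mathcomp Require Import all_boot all_order all_algebra all_fingroup.
From mathcomp Require Import zify.
Import Order.TTheory GRing.Theory Num.Theory.
Local Open Scope ring_scope.
Set Implicit Arguments.
Unset Strict Implicit.

(* Group the profiles by their (a,b)-pattern v in {0,1}^n.
   - For a <> b, composing with the transposition (a b) the rankings of the
     voters on which v and w disagree maps the fibre of v injectively into the
     fibre of w, so all k = 2^n fibres have the same size s.
   - A pair (x, x') with equal patterns lies in a single fibre, hence
     M = (sum_v A_v B_v) / (k s^2), where A_v (resp. B_v) counts the profiles
     of the fibre v with F = a (resp. F = b).
   - G^{a,b} is constant on a fibre and picks the larger of A_v and B_v, so
     the number c_v of profiles of the fibre v counted by N is A_v or B_v,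
     whichever is smaller; thus c_v^2 <= A_v B_v and N = (sum_v c_v) / (k s).
   - Cauchy-Schwarz, (sum_v c_v)^2 <= k sum_v c_v^2, then gives N^2 <= M. *)

Lemma card_by_fibres (T U : finType) (A : {set T}) (f : T -> U) :
  #|A| = (\sum_(u : U) #|[set x in A | f x == u]|)%N.
Proof.
rewrite -sum1_card (partition_big f predT) //=.
by apply: eq_bigr => u _; rewrite -sum1_card; apply: eq_bigl => x; rewrite inE.
Qed.

Lemma card_pairs_by_fibres (T U : finType) (f : T -> U) (P Q : pred T) :
  #|[set p : T * T | [&& f p.1 == f p.2, P p.1 & Q p.2]]|
  = (\sum_(u : U) #|[set x | (f x == u) && P x]|
                    * #|[set x | (f x == u) && Q x]|)%N.
Proof.
rewrite (card_by_fibres _ (fun p => f p.1)); apply: eq_bigr => u _.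
rewrite -cardsX; apply: eq_card => -[x y]; rewrite !inE /=.
by case: (f x =P u) => [->|_]; case: (f y =P u) => [->|fy_u];
  rewrite ?eqxx ?andbF //= ?andbT // [_ == _]eq_sym; move/eqP: fy_u => /negbTE ->.
Qed.

Lemma sum_sqr_le (I : finType) (c : I -> nat) :
  ((\sum_i c i) ^ 2 <= #|I| * \sum_i c i ^ 2)%N.
Proof.
have cross_le : (\sum_i \sum_j 2 * (c i * c j) <= \sum_i \sum_j (c i ^ 2 + c j ^ 2))%N.
  by apply: leq_sum => i _; apply: leq_sum => j _; have := (nat_AGM2 (c i) (c j)).1; nia.
have cross_sum : (\sum_i \sum_j 2 * (c i * c j) = 2 * (\sum_i c i) ^ 2)%N.
  rewrite -mulnn big_distrlr /= big_distrr /=.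
  by apply: eq_bigr => i _; rewrite big_distrr.
have sum_const x : (\sum_(i : I) x = #|I| * x)%N by rewrite sum_nat_const.
have sqr_sum : (\sum_i \sum_j (c i ^ 2 + c j ^ 2) = 2 * (#|I| * \sum_i c i ^ 2))%N.
  rewrite (eq_bigr (fun i => #|I| * c i ^ 2 + \sum_j c j ^ 2)%N); last first.
    by move=> i _; rewrite big_split /= sum_const.
  by rewrite big_split /= sum_const -big_distrr /=; lia.
rewrite cross_sum sqr_sum in cross_le.
lia.
Qed.

Lemma ratio_sqr_le (X Z k s : nat) : (0 < k)%N -> (X ^ 2 <= k * Z)%N ->
  (X%:R / (k * s)%:R : rat) ^+ 2 <= Z%:R / (k * (s * s))%:R.
Proof.
move=> k_gt0 XZ; have [->|s_gt0] := posnP s.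
  by rewrite !muln0 !invr0 !mulr0 expr0n.
have ks_gt0 : (0 < k * s)%N by rewrite muln_gt0 k_gt0.
have kss_gt0 : (0 < k * (s * s))%N by rewrite !muln_gt0 k_gt0 s_gt0.
rewrite expr_div_n ler_pdivrMr ?exprn_gt0 ?ltr0n // mulrAC ler_pdivlMr ?ltr0n //.
rewrite -!natrX -!natrM ler_nat.
by have := leq_mul XZ (leqnn (s * s)); rewrite expnMn; nia.
Qed.

Lemma selected_count_le_min (A B s : nat) (t g : bool) :
  (A <= s)%N -> (B <= s)%N ->
  g = (if (B%:R / s%:R : rat) < A%:R / s%:R then true
       else if (A%:R / s%:R : rat) < B%:R / s%:R then false else t) ->
  ((if g then B else A) <= minn A B)%N.
Proof.
move=> As Bs ->; rewrite leq_min.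
have [s0|s_gt0] := posnP s.
  have [-> ->] : A = 0%N /\ B = 0%N by lia.
  by case: ifP => //; case: ifP.
have s_inv_gt0 : (0 : rat) < s%:R^-1 by rewrite invr_gt0 ltr0n.
rewrite !ltr_pM2r // !ltr_nat.
by case: (ltngtP B A) => [? | ? | ->] /=; [lia | lia | case: t; rewrite leqnn].
Qed.

Section PatternFibres.

Variables (n m : nat) (a b : 'I_m).
Hypothesis a_neq_b : a != b.

Lemma prefers_tperm (s : {perm 'I_m}) :
  prefers (tperm a b * s)%g a b = ~~ prefers s a b.
Proof.
rewrite /prefers !permM tpermL tpermR.
have sab : nat_of_ord (s a) != s b by rewrite val_eqE (inj_eq perm_inj).
by case: ltngtP sab.
Qed.

(* Swap a and b in the rankings of the voters where the patterns v and w
   differ: an involution sending the fibre of v into the fibre of w. *)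
Definition swap_on_disagreement (v w : {ffun 'I_n -> bool}) (x : profile n m)
  : profile n m := [ffun i => if v i == w i then x i else (tperm a b * x i)%g].

Lemma swap_on_disagreementK v w :
  involutive (swap_on_disagreement v w).
Proof.
move=> x; apply/ffunP => i; rewrite !ffunE.
by case: (v i == w i) => //; rewrite mulgA tperm2 mul1g.
Qed.

(* Its injectivity bounds the size of one fibre by that of any other. *)
Lemma card_fibre_le (v w : {ffun 'I_n -> bool}) :
  (#|[set x : profile n m | pattern x a b == v]|
    <= #|[set x : profile n m | pattern x a b == w]|)%N.
Proof.
rewrite -(card_imset _ (inv_inj (swap_on_disagreementK v w))).
apply: subset_leq_card; apply/subsetP => y /imsetP [x]; rewrite inE => /eqP xv ->.
rewrite inE; apply/eqP/ffunP => i; rewrite !ffunE.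
have <- : prefers (x i) a b = v i by rewrite -xv ffunE.
by case: eqP => [//|vw]; rewrite prefers_tperm; case: (w i) vw; case: prefers.
Qed.

Lemma card_fibre_const (v w : {ffun 'I_n -> bool}) :
  #|[set x : profile n m | pattern x a b == v]|
  = #|[set x : profile n m | pattern x a b == w]|.
Proof. by apply/eqP; rewrite eqn_leq !card_fibre_le. Qed.

Lemma card_profiles (v0 : {ffun 'I_n -> bool}) :
  #|[set: profile n m]|
  = (#|{ffun 'I_n -> bool}| * #|[set x : profile n m | pattern x a b == v0]|)%N.
Proof.
rewrite [LHS](card_by_fibres _ (fun x => pattern x a b)) -sum_nat_const.
apply: eq_bigr => v _; rewrite (card_fibre_const v0 v).
by apply: eq_card => x; rewrite !inE.
Qed.

Lemma card_same_pattern (v0 : {ffun 'I_n -> bool}) :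
  #|[set p : profile n m * profile n m | pattern p.1 a b == pattern p.2 a b]|
  = (#|{ffun 'I_n -> bool}| * (#|[set x : profile n m | pattern x a b == v0]|
                              * #|[set x : profile n m | pattern x a b == v0]|))%N.
Proof.
rewrite (eq_card (B := [set p : profile n m * profile n m |
    [&& pattern p.1 a b == pattern p.2 a b, predT p.1 & predT p.2]])); last first.
  by move=> p; rewrite !inE /= !andbT.
rewrite (card_pairs_by_fibres (fun x => pattern x a b) predT predT) -[RHS]sum_nat_const.
apply: eq_bigr => v _; rewrite (card_fibre_const v0 v).
by congr (_ * _)%N; apply: eq_card => x; rewrite !inE andbT.
Qed.

End PatternFibres.

Section GonFibres.

Variables (n m : nat) (F : profile n m -> 'I_m) (i0 : 'I_n) (a b : 'I_m).

Definition G_of_pattern (v : {ffun 'I_n -> bool}) : bool :=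
  let pa := condPr F a b v a in
  let pb := condPr F a b v b in
  if pb < pa then true else if pa < pb then false else v i0.

Lemma GSWF_pattern x : GSWF F i0 a b x = G_of_pattern (pattern x a b).
Proof. by rewrite /GSWF /G_of_pattern ffunE. Qed.

Definition fibre_count (v : {ffun 'I_n -> bool}) (c : 'I_m) : nat :=
  #|[set x : profile n m | (pattern x a b == v) && (F x == c)]|.

Definition disagreement_set : {set profile n m} :=
  [set x | ((F x == a) && ~~ GSWF F i0 a b x) || ((F x == b) && GSWF F i0 a b x)].

(* On the fibre v the disagreement set consists of the profiles with F = b
   if G chooses a, and of those with F = a otherwise; hence its size is at
   most min(A_v, B_v). *)
Lemma card_disagreement_fibre_le v :
  (#|[set x in disagreement_set | pattern x a b == v]|
     <= minn (fibre_count v a) (fibre_count v b))%N.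
Proof.
have -> : [set x in disagreement_set | pattern x a b == v]
    = if G_of_pattern v then [set x | (pattern x a b == v) && (F x == b)]
      else [set x | (pattern x a b == v) && (F x == a)].
  apply/setP => x; case Gv: (G_of_pattern v); rewrite !inE GSWF_pattern;
  by case: (pattern x a b =P v) => [->|_]; rewrite ?Gv /= ?andbF ?andbT ?orbF.
rewrite (fun_if (fun S : {set profile n m} => #|S|)).
have count_le c : (fibre_count v c <= #|[set x : profile n m | pattern x a b == v]|)%N.
  by apply: subset_leq_card; apply/subsetP => x; rewrite !inE => /andP[].
rewrite -/(fibre_count v a) -/(fibre_count v b).
exact: (@selected_count_le_min _ _ _ (v i0) _ (count_le a) (count_le b)).
Qed.

End GonFibres.

Unset Implicit Arguments.

Theorem proposition4p6 (n m : nat) (hm : (2 < m)%N)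
    (F : profile n m -> 'I_m) (i0 : 'I_n) (a b : 'I_m) (hab : a != b) :
  Nab F i0 a b ^+ 2 <= Mab F a b.
Proof.
pose c v := #|[set x in disagreement_set F i0 a b | pattern x a b == v]|.
rewrite /Nab /Mab (card_profiles hab [ffun=> true]) (card_same_pattern hab [ffun=> true]).
rewrite -/(disagreement_set F i0 a b) (card_by_fibres _ (fun x => pattern x a b)).
rewrite (card_pairs_by_fibres (fun x => pattern x a b) (fun x => F x == a) (fun x => F x == b)).
apply: ratio_sqr_le; first by apply/card_gt0P; exists [ffun=> true].
apply: (leq_trans (sum_sqr_le c)); rewrite leq_mul2l; apply/orP; right.
apply: leq_sum => v _; rewrite -mulnn.
have := card_disagreement_fibre_le F i0 a b v; rewrite leq_min => /andP[ca cb].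
exact: leq_mul.
Qed.
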